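(* Let $g\ge0$, $n\ge1$, $d\geq 1$ an integer and $S_1,\dots,S_d\subseteq\{1,\dots,n\}$. Let $Ch$ be a chamber such that $\sum_{i\in S_j}a_i<1$ for every $(a_1,\dots,a_n)\in Ch$ and every $j=1,\dots,d$. Let $\mathcal{R}=(r_1,\dots,r_n)$ be a weight datum such that $\sum_{i\in S_j}r_i=1$ for every $j=1,\dots,d$, while for every wall-indexing set $S\neq S_j$ (all $j$), $\mathcal{R}$ belongs to the half-space determined by the hyperplane $\sum_{i\in S}x_i=1$ that contains $Ch$. Then $\mathcal{G}_{g,\mathcal{A}}=\mathcal{G}_{g,\mathcal{R}}$ for every $\mathcal{A}\in Ch$.
   Context: A weight datum is $\mathcal{A}=(a_1,\dots,a_n)$ with $a_i\in\mathbb{Q}\cap(0,1]$ and $2g-2+\sum_i a_i>0$; $\mathcal{D}_{g,n}\subset\mathbb{R}^n$ is the set of weight data. For $S\subseteq\{1,\dots,n\}$ with $2\le|S|\le n$ if $g\ge1$ (resp. $2\le|S|\le n-2$ if $g=0$) (a wall-indexing set), the wall $w_S$ is the locus $\sum_{i\in S}a_i=1$ in $\mathcal{D}_{g,n}$. Chambers are the connected components of the complement in $\mathcal{D}_{g,n}$ of the union of all walls. A $(g,\mathcal{A})$-stable graph is a finite connected graph $G$ (loops and multiple edges allowed) with vertex weight $w:V(G)\to\mathbb{Z}_{\ge0}$ and $n$ legs labelled $1,\dots,n$ attached via $m:\{1,\dots,n\}\to V(G)$, with $b_1(G)+\sum_v w(v)=g$ and $2w(v)-2+|v|_E+|v|_{\mathcal{A}}>0$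 for every vertex $v$, where $|v|_E$ is the number of edge half-edges at $v$ (loops counted twice) and $|v|_{\mathcal{A}}=\sum_{m(i)=v}a_i$. $\mathcal{G}_{g,\mathcal{A}}$ is the category whose objects are $(g,\mathcal{A})$-stable graphs and whose morphisms are compositions of isomorphisms of weighted marked graphs and weighted edge contractions. *)

From HB Require Import structures.
From mathcomp Require Import all_boot all_order all_algebra.
Set Implicit Arguments. Unset Strict Implicit. Unset Printing Implicit Defensive.
Import Order.TTheory GRing.Theory Num.Theory.
Local Open Scope ring_scope.

Definition weight_datum (g n : nat) (A : 'I_n -> rat) : Prop :=
  (forall i, 0 < A i /\ A i <= 1) /\ 0 < 2 * g%:R - 2 + \sum_(i < n) A i.

Definition wall_indexing (g n : nat) (S : {set 'I_n}) : Prop :=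
  if (1 <= g)%N then (2 <= #|S| <= n)%N else (2 <= #|S| <= n - 2)%N.

Definition wsum n (S : {set 'I_n}) (A : 'I_n -> rat) : rat := \sum_(i in S) A i.

Definition is_chamber (g n : nat) (Ch : ('I_n -> rat) -> Prop) : Prop :=
  (exists A, Ch A) /\
  exists sigma : {set 'I_n} -> bool,
    forall A, Ch A <->
      (weight_datum g A /\
       forall S, wall_indexing g S ->
         if sigma S then wsum S A < 1 else 1 < wsum S A).

(* vertices 'I_nv, edges 'I_ne with (unordered) endpoints [ends e]
   (a loop has both endpoints equal), vertex weights [wt],
   legs 1..n attached via [leg]. *)
Record mgraph (n : nat) := MGraph {
  nv : nat;
  ne : nat;
  ends : 'I_ne -> 'I_nv * 'I_nv;
  wt : 'I_nv -> nat;
  leg : 'I_n -> 'I_nv }.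
Arguments nv {n} m.
Arguments ne {n} m.
Arguments ends {n} m _.
Arguments wt {n} m _.
Arguments leg {n} m _.

Definition adj n (G : mgraph n) : rel 'I_(nv G) :=
  fun u v => [exists e, (ends G e == (u, v)) || (ends G e == (v, u))].

Definition gconnected n (G : mgraph n) : Prop :=
  forall u v : 'I_(nv G), connect (@adj n G) u v.

(* |v|_E : number of edge half-edges at v (loops counted twice) *)
Definition valE n (G : mgraph n) (v : 'I_(nv G)) : nat :=
  #|[set e | (ends G e).1 == v]| + #|[set e | (ends G e).2 == v]|.

Definition legw n (A : 'I_n -> rat) (G : mgraph n) (v : 'I_(nv G)) : rat :=
  \sum_(i < n | leg G i == v) A i.

(* (g,A)-stable graph; b_1(G) = |E| - |V| + 1 for a connected graph *)
Definition stable (g n : nat) (A : 'I_n -> rat) (G : mgraph n) : Prop :=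
  (0 < nv G)%N /\ gconnected G /\
  ((ne G)%:Z - (nv G)%:Z + 1 + (\sum_(v < nv G) wt G v)%:Z = g%:Z)%R /\
  forall v : 'I_(nv G),
    0 < 2 * (wt G v)%:R - 2 + (valE v)%:R + legw A v.

(* ---------- morphisms: weighted edge contractions (incl. isomorphisms) ----------
   f : vertex map (surjective), h : injective map from the edges of H onto the
   non-contracted edges of G; contracted edges lie inside fibres, each fibre
   with its contracted edges is connected, legs are respected, and the weight
   of a vertex y of H is the total weight of its fibre plus the first Betti
   number of the contracted subgraph on the fibre. *)
Definition contracted n (G H : mgraph n) (h : 'I_(ne H) -> 'I_(ne G))
  (e : 'I_(ne G)) : bool := e \notin codom h.

Definition fib_adj n (G H : mgraph n) (f : 'I_(nv G) -> 'I_(nv H))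
  (h : 'I_(ne H) -> 'I_(ne G)) (y : 'I_(nv H)) : rel 'I_(nv G) :=
  fun u v => (f u == y) && (f v == y) &&
    [exists e, contracted h e && ((ends G e == (u, v)) || (ends G e == (v, u)))].

Definition is_contraction n (G H : mgraph n) (f : 'I_(nv G) -> 'I_(nv H))
  (h : 'I_(ne H) -> 'I_(ne G)) : Prop :=
  (forall y, exists x, f x = y) /\
  injective h /\
  (forall e, (f (ends G (h e)).1 = (ends H e).1 /\ f (ends G (h e)).2 = (ends H e).2)
          \/ (f (ends G (h e)).1 = (ends H e).2 /\ f (ends G (h e)).2 = (ends H e).1)) /\
  (forall e, contracted h e -> f (ends G e).1 = f (ends G e).2) /\
  (forall y u v, f u = y -> f v = y -> connect (fib_adj f h y) u v) /\
  (forall i, f (leg G i) = leg H i) /\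
  (forall y, ((wt H y)%:Z =
      (\sum_(x | f x == y) wt G x)%:Z
      + (#|[set e | contracted h e && (f (ends G e).1 == y)]|)%:Z
      - (#|[set x | f x == y]|)%:Z + 1)%R).

Definition hom (g n : nat) (A : 'I_n -> rat) (G H : mgraph n)
  (f : 'I_(nv G) -> 'I_(nv H)) (h : 'I_(ne H) -> 'I_(ne G)) : Prop :=
  stable g A G /\ stable g A H /\ is_contraction f h.

Arguments hom g {n} A G H f h.

Definition same_category (g n : nat) (A B : 'I_n -> rat) : Prop :=
  (forall G : mgraph n, stable g A G <-> stable g B G) /\
  (forall (G H : mgraph n) f h, hom g A G H f h <-> hom g B G H f h).

From Pilot Require Import Defs.
From HB Require Import structures.
From mathcomp Require Import all_boot all_order all_algebra.
From mathcomp Require Import zify lra.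
Set Implicit Arguments. Unset Strict Implicit. Unset Printing Implicit Defensive.
Import Order.TTheory GRing.Theory Num.Theory.
Local Open Scope ring_scope.

(* Writing c = 2w(v) + |v|_E, the stability inequality at v reads
   c - 2 + |v|_A > 0, where |v|_A is a sum of weights in (0,1].  It always
   holds for c >= 3, means "v carries a leg" for c = 2, means |v|_A > 1 for
   c = 1 (false when v carries at most one leg), and for c = 0 the graph is a
   single vertex carrying all legs with g = 0, where it is the weight-datum
   condition.  Hence A and R have the same stable graphs, and then the same
   morphisms, as soon as they agree on which sets S with |S| >= 2 have
   sum_{i in S} > 1.  For a wall S_j neither sum exceeds 1 (< 1 on Ch, = 1
   at R); for any other wall R lies on the side of Ch; and a set with
   |S| >= 2 indexing no wall forces g = 0 and leaves at most one index out,
   so its sum exceeds 1 for every weight datum. *)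

Section WeightSums.

Variables (g n : nat) (X : 'I_n -> rat).
Hypothesis wX : weight_datum g X.

Lemma wsum_ge0 (S : {set 'I_n}) : 0 <= wsum S X.
Proof. by apply: sumr_ge0 => i _; case: (wX.1 i) => /ltW. Qed.

Lemma wsum_gt0 {S : {set 'I_n}} : S != set0 -> 0 < wsum S X.
Proof.
case/set0Pn=> i Si; have := wsum_ge0 (S :\ i); case: (wX.1 i) => Xi_gt0 _.
by rewrite /wsum (big_setD1 i Si) /=; lra.
Qed.

Lemma wsum_le1 {S : {set 'I_n}} : (#|S| <= 1)%N -> wsum S X <= 1.
Proof.
move=> S_le1; have [->|[i Si]] := set_0Vmem S; first by rewrite /wsum big_set0.
have -> : S = [set i] by apply/eqP; rewrite eq_sym eqEcard sub1set Si cards1.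
by rewrite /wsum big_set1; case: (wX.1 i).
Qed.

Lemma sum_eq_wsum_setC (S : {set 'I_n}) :
  \sum_(i < n) X i = wsum S X + wsum (~: S) X.
Proof.
by rewrite /wsum (bigID (mem S)) /=; congr (_ + _); apply: eq_bigl => i; rewrite inE.
Qed.

Lemma wsum_gt1_not_wall_indexing (S : {set 'I_n}) :
  (2 <= #|S|)%N -> ~ wall_indexing g S -> 1 < wsum S X.
Proof.
rewrite /wall_indexing; have := max_card S; rewrite card_ord => S_le_n S_ge2.
case: ifP => [_|/negbT g_lt1]; first by rewrite S_ge2 S_le_n.
have g0 : g = 0%N by lia.
rewrite S_ge2 /= => /negP S_gt.
have {}S_gt : (n - 2 < #|S|)%N by rewrite ltnNge.
have SC_le1 : (#|~: S| <= 1)%N by have := cardsC S; rewrite card_ord; lia.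
have := wsum_le1 SC_le1; have := wX.2; rewrite g0 (sum_eq_wsum_setC S) /=.
by rewrite mulr0; lra.
Qed.

End WeightSums.

Definition wsum_gt1_equiv n (A R : 'I_n -> rat) : Prop :=
  forall S : {set 'I_n}, (2 <= #|S|)%N -> (1 < wsum S A) = (1 < wsum S R).

Lemma stable_ineq_equiv (g n : nat) (A R : 'I_n -> rat) (S : {set 'I_n}) (c : nat) :
  weight_datum g A -> weight_datum g R -> wsum_gt1_equiv A R ->
  (c = 0%N -> g = 0%N /\ S = setT) ->
  (0 < c%:R - 2 + wsum S A) = (0 < c%:R - 2 + wsum S R).
Proof.
move=> wA wR AR isolated.
have [|c_le2] := leqP 3 c.
  rewrite -(ler_nat rat) => c_ge3.
  by have := wsum_ge0 wA S; have := wsum_ge0 wR S; lra.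
move: c_le2 isolated; case: c => [|[|[|//]]] _ isolated.
- have [g0 ->] := isolated erefl.
  have sumT (X : 'I_n -> rat) : weight_datum 0 X -> 2 < wsum setT X.
    move=> [_]; have -> : wsum setT X = \sum_(i < n) X i.
      by apply: eq_bigl => i; rewrite in_setT.
    lra.
  by move: wA wR; rewrite g0 => /sumT wA /sumT wR; lra.
- have [S_le1|S_ge2] := leqP #|S| 1.
    by have := wsum_le1 wA S_le1; have := wsum_le1 wR S_le1; lra.
  by have := AR S S_ge2; lra.
- have [->|S0] := eqVneq S set0; first by rewrite /wsum !big_set0.
  by have := wsum_gt0 wA S0; have := wsum_gt0 wR S0; lra.
Qed.

Section IsolatedVertex.

Variables (n : nat) (G : mgraph n) (v : 'I_(nv G)).
Hypotheses (connG : gconnected G) (v_isolated : valE v = 0%N).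

Lemma isolated_no_edge_at (e : 'I_(ne G)) :
  (ends G e).1 != v /\ (ends G e).2 != v.
Proof.
move: v_isolated; rewrite /valE => /eqP; rewrite addn_eq0 !cards_eq0.
by case/andP=> /eqP/setP/(_ e) + /eqP/setP/(_ e); rewrite !inE => -> ->.
Qed.

Lemma isolated_only_vertex (u : 'I_(nv G)) : u = v.
Proof.
have /connectP [[|x p] //= /andP [/existsP [e adj_e] _] _] := connG v u.
have [no1 no2] := isolated_no_edge_at e.
by case/orP: adj_e => /eqP ends_e; rewrite ends_e eqxx in no1 no2.
Qed.

Lemma isolated_nv_ne : nv G = 1%N /\ ne G = 0%N.
Proof.
split.
  case: (ltngtP (nv G) 1) => // [nv_lt1|nv_gt1]; first by have := ltn_ord v; lia.
  have /(congr1 val) := isolated_only_vertex (Ordinal nv_gt1).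
  by have /(congr1 val) <- := isolated_only_vertex (Ordinal (ltnW nv_gt1)).
case: (posnP (ne G)) => // ne_gt0.
case: (isolated_no_edge_at (Ordinal ne_gt0)).
by rewrite (isolated_only_vertex (ends G _).1) eqxx.
Qed.

Lemma isolated_genus (g : nat) :
  ((ne G)%:Z - (nv G)%:Z + 1 + (\sum_(u < nv G) wt G u)%:Z = g%:Z)%R ->
  g = wt G v.
Proof.
have [nv1 ne0] := isolated_nv_ne.
rewrite (bigD1 v) //= big1 ?addn0 => [|u]; last by rewrite (isolated_only_vertex u) eqxx.
by rewrite nv1 ne0; lia.
Qed.

End IsolatedVertex.

Lemma legwE n (X : 'I_n -> rat) (G : mgraph n) (v : 'I_(nv G)) :
  legw X v = wsum [set i | leg G i == v] X.
Proof. by rewrite /legw /wsum; apply: eq_bigl => i; rewrite inE. Qed.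

Lemma stable_wsum_gt1_equiv (g n : nat) (A R : 'I_n -> rat) (G : mgraph n) :
  weight_datum g A -> weight_datum g R -> wsum_gt1_equiv A R ->
  stable g A G <-> stable g R G.
Proof.
move=> wA wR AR.
suff vertexE : gconnected G ->
    ((ne G)%:Z - (nv G)%:Z + 1 + (\sum_(u < nv G) wt G u)%:Z = g%:Z)%R ->
    forall v : 'I_(nv G),
    (0 < 2 * (wt G v)%:R - 2 + (valE v)%:R + legw A v) =
    (0 < 2 * (wt G v)%:R - 2 + (valE v)%:R + legw R v).
  split=> -[nv_gt0 [connG [genusG stab]]]; (do !split=> //) => v.
  - by rewrite -(vertexE connG genusG).
  - by rewrite (vertexE connG genusG).
move=> connG genusG v; rewrite !legwE.
have shiftE (x : rat) :
    2 * (wt G v)%:R - 2 + (valE v)%:R + x = (2 * wt G v + valE v)%:R - 2 + x.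
  by rewrite natrD natrM; lra.
rewrite !shiftE; apply: (stable_ineq_equiv wA wR AR) => c0.
have [w0 val0] : wt G v = 0%N /\ valE v = 0%N by lia.
have g0 := isolated_genus connG val0 genusG; rewrite w0 in g0.
split=> //; apply/setP=> i; rewrite !inE (isolated_only_vertex connG val0 (leg G i)).
by rewrite eqxx.
Qed.

Lemma same_category_wsum_gt1_equiv (g n : nat) (A R : 'I_n -> rat) :
  weight_datum g A -> weight_datum g R -> wsum_gt1_equiv A R ->
  same_category g A R.
Proof.
move=> wA wR AR; have stableE := stable_wsum_gt1_equiv _ wA wR AR.
split=> // G H f h; have := stableE G; have := stableE H.
by rewrite /Defs.hom; tauto.
Qed.

Lemma wall_indexing_dec g n (S : {set 'I_n}) : decidable (wall_indexing g S).
Proof. exact: decP idP. Qed.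

Lemma chamber_wsum_gt1_equiv (g n d : nat) (Sj : 'I_d -> {set 'I_n})
  (Ch : ('I_n -> rat) -> Prop) (R A : 'I_n -> rat) :
  is_chamber g Ch -> Ch A ->
  (forall A, Ch A -> forall j, wsum (Sj j) A < 1) ->
  weight_datum g R ->
  (forall j, wsum (Sj j) R = 1) ->
  (forall S, wall_indexing g S -> (forall j, S != Sj j) ->
     forall A, Ch A ->
       (wsum S A < 1 -> wsum S R < 1) /\ (1 < wsum S A -> 1 < wsum S R)) ->
  wsum_gt1_equiv A R.
Proof.
move=> [_ [sigma Ch_sides]] ChA Sj_lt1 wR Sj_R R_side S S_ge2.
have [wA A_side] := (Ch_sides A).1 ChA.
have [wallS|not_wallS] := wall_indexing_dec g S; last first.
  by rewrite (wsum_gt1_not_wall_indexing wA) ?(wsum_gt1_not_wall_indexing wR).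
have [/existsP [j /eqP ->]|] := boolP [exists j, S == Sj j].
  by have := Sj_lt1 A ChA j; rewrite Sj_R ltxx; lra.
rewrite negb_exists => /forallP S_neq.
have [R_lt R_gt] := R_side S wallS (fun j => S_neq j) A ChA.
have := A_side S wallS; case: (sigma S) => [/[dup] /R_lt|/[dup] /R_gt]; lra.
Qed.

Theorem mainTheorem3 (g n d : nat) (Sj : 'I_d -> {set 'I_n})
  (Ch : ('I_n -> rat) -> Prop) (R : 'I_n -> rat) :
  (1 <= n)%N -> (1 <= d)%N ->
  is_chamber g Ch ->
  (forall A, Ch A -> forall j, wsum (Sj j) A < 1) ->
  weight_datum g R ->
  (forall j, wsum (Sj j) R = 1) ->
  (forall S, wall_indexing g S -> (forall j, S != Sj j) ->
     forall A, Ch A ->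
       (wsum S A < 1 -> wsum S R < 1) /\ (1 < wsum S A -> 1 < wsum S R)) ->
  forall A, Ch A -> same_category g A R.
Proof.
move=> _ _ ChamberCh Sj_lt1 wR Sj_R R_side A ChA.
have wA : weight_datum g A.
  by case: ChamberCh => _ [sigma Ch_sides]; case: ((Ch_sides A).1 ChA).
apply: same_category_wsum_gt1_equiv => //.
exact: chamber_wsum_gt1_equiv ChamberCh ChA Sj_lt1 wR Sj_R R_side.
Qed.
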